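(* Let $V$ be a finite-dimensional real vector space and let $(\zeta,Z)$ be the universal 2-connection valued in $\mathbf T(V)$. For any 2-connection $(\alpha,\gamma)$ on $V$ valued in a crossed module of algebras $\mathbf A=(\delta^A:A_1\to A_0,\gtrdot,\lessdot)$, there exists a unique morphism of crossed modules of algebras $(\widetilde\alpha,\widetilde\gamma):\mathbf T(V)\to\mathbf A$ such that $\alpha=\widetilde\alpha\circ\zeta$ and $\gamma=\widetilde\gamma\circ Z$.
   Context: A crossed module of algebras $\mathbf A=(\delta^A:A_1\to A_0,\gtrdot,\lessdot)$ consists of a unital algebra $(A_0,\cdot,1)$, an algebra $(A_1,* )$ (not necessarily unital) which is an $A_0$-bimodule via left/right actions $\gtrdot,\lessdot$, such that $a\gtrdot(E*E')=(a\gtrdot E)*E'$, $(E*E')\lessdot a=E*(E'\lessdot a)$, $(E\lessdot a)*(a'\gtrdot E')=E*((a\cdot a')\gtrdot E')=(E\lessdot(a\cdot a'))*E'$, together with an algebra morphism $\delta^A$ satisfying $\delta^A(a\gtrdot E)=a\cdot\delta^A(E)$, $\delta^A(E\lessdot a)=\delta^A(E)\cdot a$, and $\delta^A(E)\gtrdot E'=E*E'=E\lessdot\delta^A(E')$. A morphism $(f_1,f_0):\mathbf A\to\mathbf B$ consists of algebra morphisms $f_0:A_0\to B_0$, $f_1:A_1\to B_1$ with $\delta^B\circ f_1=f_0\circ\delta^A$, $f_1(a\gtrdot E)=f_0(a)\gtrdot f_1(E)$, $f_1(E\lessdot a)=f_1(E)\lessdot f_0(a)$. A 2-connection on $V$ valued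 in $\mathbf A$ is a pair of linear maps $\alpha:V\to A_0$, $\gamma:\Lambda^2V\to A_1$ with $\delta^A\circ\gamma=[\alpha,\alpha]$, i.e. $\delta^A(\gamma(v\wedge w))=\alpha(v)\alpha(w)-\alpha(w)\alpha(v)$. $\mathbf T(V)$: $T_0(V)=\bigoplus_{n\ge0}V^{\otimes n}$ is the tensor algebra; on the free bimodule $T_0(V)\otimes\Lambda^2V\otimes T_0(V)$ (actions by multiplication on the outer factors) define $\delta(a\otimes(v\wedge w)\otimes b)=a\cdot(v\cdot w-w\cdot v)\cdot b$; let $\mathrm{Pf}$ be the span of $\delta(E)\cdot F-E\cdot\delta(F)$ for all $E,F$; $T_1(V)=(T_0(V)\otimes\Lambda^2V\otimes T_0(V))/\mathrm{Pf}$ with the induced actions and $\delta$, and product $E*F=\delta(E)\cdot F=E\cdot\delta(F)$; $\mathbf T(V)=(\delta:T_1(V)\to T_0(V),\cdot,\cdot)$ is a crossed module of algebras. The universal 2-connection is $\zeta:V\to T_0(V)$ the inclusion and $Z:\Lambda^2V\to T_1(V)$, $Z(v\wedge w)=$ class of $1\otimes(v\wedge w)\otimes1$. *)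

From HB Require Import structures.
From mathcomp Require Import all_boot all_algebra finmap generic_quotient.
From mathcomp.multinomials Require Import monalg.
From mathcomp.classical Require Import boolp.

Set Implicit Arguments.
Unset Strict Implicit.
Unset Printing Implicit Defensive.

Import GRing.Theory.
Local Open Scope ring_scope.
Local Open Scope quotient_scope.

Section MalgAlgebra.
Context (K : monomType) (R : comNzRingType).

Lemma malg_mulCr (c : R) (g : {malg R[K]}) : g * c%:MP = c *: g.
Proof.
rewrite -mul_malgC; apply/malgP => k.
rewrite (@mcoeffMrw _ _ _ _ _ _ k (fsubset_refl _) (msuppC_le c)).
rewrite (@mcoeffMlw _ _ _ _ _ _ k (msuppC_le c) (fsubset_refl _)).
rewrite !big_seq_fset1; apply: eq_bigr => k' _.
by rewrite mulm1 mul1m mulrC.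
Qed.

Lemma malg_scaleAr (c : R) (x y : {malg R[K]}) : c *: (x * y) = x * (c *: y).
Proof. by rewrite -!mul_malgC mulrA [c%:MP * x]mul_malgC -malg_mulCr -mulrA. Qed.

End MalgAlgebra.

Record xmod_data (R : comNzRingType) := XModData {
  xm0 : algType R;
  xm1 : lmodType R;
  xmul1 : xm1 -> xm1 -> xm1;
  xlact : xm0 -> xm1 -> xm1;
  xract : xm1 -> xm0 -> xm1;
  xdelta : xm1 -> xm0
}.

Arguments xmul1 {R} _ _ _.
Arguments xlact {R} _ _ _.
Arguments xract {R} _ _ _.
Arguments xdelta {R} _ _.

Definition is_linear (R : nzRingType) (U W : lmodType R) (f : U -> W) : Prop :=
  forall (c : R) (x y : U), f (c *: x + y) = c *: f x + f y.

Definition is_bilinear (R : nzRingType) (U1 U2 W : lmodType R)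
  (f : U1 -> U2 -> W) : Prop :=
  (forall y, is_linear (fun x => f x y)) /\ (forall x, is_linear (f x)).

Definition is_xmod (R : comNzRingType) (A : xmod_data R) : Prop :=
  is_bilinear (xmul1 A) /\ associative (xmul1 A) /\
  is_bilinear (xlact A) /\ is_bilinear (xract A) /\
  (forall (a b : xm0 A) E, xlact A (a * b) E = xlact A a (xlact A b E)) /\
  (forall E, xlact A 1 E = E) /\
  (forall (a b : xm0 A) E, xract A E (a * b) = xract A (xract A E a) b) /\
  (forall E, xract A E 1 = E) /\
  (forall (a b : xm0 A) E, xract A (xlact A a E) b = xlact A a (xract A E b)) /\
  (forall a E F, xlact A a (xmul1 A E F) = xmul1 A (xlact A a E) F) /\
  (forall a E F, xract A (xmul1 A E F) a = xmul1 A E (xract A F a)) /\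
  (forall a b E F, xmul1 A (xract A E a) (xlact A b F)
                   = xmul1 A E (xlact A (a * b) F)) /\
  (forall a b E F, xmul1 A E (xlact A (a * b) F)
                   = xmul1 A (xract A E (a * b)) F) /\
  is_linear (xdelta A) /\
  (forall E F, xdelta A (xmul1 A E F) = xdelta A E * xdelta A F) /\
  (forall a E, xdelta A (xlact A a E) = a * xdelta A E) /\
  (forall a E, xdelta A (xract A E a) = xdelta A E * a) /\
  (forall E F, xlact A (xdelta A E) F = xmul1 A E F) /\
  (forall E F, xract A E (xdelta A F) = xmul1 A E F).

Definition is_xmod_morph (R : comNzRingType) (A B : xmod_data R)
  (f0 : xm0 A -> xm0 B) (f1 : xm1 A -> xm1 B) : Prop :=
  [/\ is_linear f0 /\ f0 1 = 1 /\ (forall a b, f0 (a * b) = f0 a * f0 b),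
      is_linear f1 /\ (forall E F, f1 (xmul1 A E F) = xmul1 B (f1 E) (f1 F)),
      (forall E, xdelta B (f1 E) = f0 (xdelta A E)),
      (forall a E, f1 (xlact A a E) = xlact B (f0 a) (f1 E)) &
      (forall a E, f1 (xract A E a) = xract B (f1 E) (f0 a))].

Arguments is_xmod_morph {R} A B f0 f1.

(* 2-connections on V valued in A.  A linear map gamma : Λ²V -> A1 is
   represented by the corresponding alternating bilinear map V x V -> A1,
   gamma v w = gamma(v ∧ w). *)
Definition is_2connection (R : comNzRingType) (V : lmodType R)
  (A : xmod_data R) (alpha : V -> xm0 A) (gamma : V -> V -> xm1 A) : Prop :=
  [/\ is_linear alpha, is_bilinear gamma, (forall v, gamma v v = 0) &
      (forall v w, xdelta A (gamma v w) = alpha v * alpha w - alpha w * alpha v)].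

Section TV.
Context (R : fieldType) (V : vectType R).

Local Notation n := (\dim {: V}).
Definition vcoord (i : 'I_n) (v : V) : R := coord (vbasis {: V}) i v.

(* words in the basis vectors: basis of T_0(V) = ⊕_k V^{⊗k} *)
Definition word := {fmonom 'I_n}.
Definition T0_type := {malg R[word]}.
HB.instance Definition _ := GRing.Lalgebra.on T0_type.
HB.instance Definition _ :=
  GRing.Lalgebra_isAlgebra.Build R T0_type (@malg_scaleAr word R).
Definition T0 : algType R := T0_type.

Definition zeta (v : V) : T0 := \sum_(i < n) vcoord i v *: << fmu i >>.

(* basis e_i ∧ e_j (i < j) of Λ²V *)
Definition wedge_idx := {ij : 'I_n * 'I_n | (ij.1 < ij.2)%N}.
(* basis of the free bimodule T_0(V) ⊗ Λ²V ⊗ T_0(V) *)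
Definition fbkey := (word * wedge_idx * word)%type.
Definition FB : lmodType R := {malg R[fbkey]}.

Definition fb_gen (u : word) (p : wedge_idx) (w : word) : FB := << (u, p, w) >>.

Definition fb_lact (a : T0) (E : FB) : FB :=
  \sum_(u <- msupp a) \sum_(k <- msupp E)
     (a@_u * E@_k) *: fb_gen (mmul u k.1.1) k.1.2 k.2.
Definition fb_ract (E : FB) (b : T0) : FB :=
  \sum_(k <- msupp E) \sum_(u <- msupp b)
     (E@_k * b@_u) *: fb_gen k.1.1 k.1.2 (mmul k.2 u).

Definition wcomm (p : wedge_idx) : T0 :=
  << fmu (val p).1 >> * << fmu (val p).2 >>
  - << fmu (val p).2 >> * << fmu (val p).1 >>.
Definition fb_delta (E : FB) : T0 :=
  \sum_(k <- msupp E) E@_k *: (<< k.1.1 >> * wcomm k.1.2 * << k.2 >>).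

Definition Pf (x : FB) : Prop :=
  exists s : seq (R * FB * FB),
    x = \sum_(t <- s) t.1.1 *: (fb_lact (fb_delta t.1.2) t.2
                               - fb_ract t.1.2 (fb_delta t.2)).

Lemma Pf0 : Pf 0.
Proof. by exists [::]; rewrite big_nil. Qed.

Lemma PfZ c x : Pf x -> Pf (c *: x).
Proof.
case=> s ->; exists [seq (c * t.1.1, t.1.2, t.2) | t <- s].
by rewrite big_map scaler_sumr; apply: eq_bigr => t _; rewrite scalerA.
Qed.

Lemma PfD x y : Pf x -> Pf y -> Pf (x + y).
Proof. by case=> s -> [s' ->]; exists (s ++ s'); rewrite big_cat. Qed.

Lemma PfN x : Pf x -> Pf (- x).
Proof. by move=> /(PfZ (-1)); rewrite scaleN1r. Qed.

Definition pf_rel : rel FB := fun x y => `[< Pf (x - y) >].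

Lemma pf_refl : reflexive pf_rel.
Proof. by move=> x; apply/asboolP; rewrite subrr; exact: Pf0. Qed.

Lemma pf_sym : symmetric pf_rel.
Proof.
move=> x y; apply/asboolP/asboolP => /PfN; by rewrite opprB.
Qed.

Lemma pf_trans : transitive pf_rel.
Proof.
move=> y x z /asboolP h1 /asboolP h2; apply/asboolP.
by have := PfD h1 h2; rewrite addrA subrK.
Qed.

Canonical pf_equiv := EquivRel pf_rel pf_refl pf_sym pf_trans.

Definition T1_type := {eq_quot pf_equiv}.
HB.instance Definition _ := Choice.copy T1_type {eq_quot pf_equiv}.
HB.instance Definition _ := Quotient.copy T1_type {eq_quot pf_equiv}.

Local Notation piT := (\pi_T1_type).

Definition T1_zero : T1_type := piT 0.
Definition T1_add (x y : T1_type) : T1_type := piT (repr x + repr y).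
Definition T1_opp (x : T1_type) : T1_type := piT (- repr x).
Definition T1_scale (c : R) (x : T1_type) : T1_type := piT (c *: repr x).

Lemma piTP (x y : FB) : piT x = piT y <-> Pf (x - y).
Proof.
split; first by move=> /eqquotP /asboolP.
by move=> h; apply/eqquotP/asboolP.
Qed.

Lemma reprP (x : FB) : Pf (repr (piT x) - x).
Proof. by apply/piTP; rewrite reprK. Qed.

Lemma T1_addE (x y : FB) : T1_add (piT x) (piT y) = piT (x + y).
Proof.
apply/piTP; have := PfD (reprP x) (reprP y).
by rewrite addrACA opprD.
Qed.

Lemma T1_oppE (x : FB) : T1_opp (piT x) = piT (- x).
Proof. by apply/piTP; have := PfN (reprP x); rewrite opprB opprK addrC. Qed.

Lemma T1_scaleE c (x : FB) : T1_scale c (piT x) = piT (c *: x).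
Proof. by apply/piTP; have := PfZ c (reprP x); rewrite scalerBr. Qed.

Lemma T1_addA : associative T1_add.
Proof.
move=> x y z; elim/(@quotW _ T1_type): x => x; elim/(@quotW _ T1_type): y => y; elim/(@quotW _ T1_type): z => z.
by rewrite !T1_addE addrA.
Qed.

Lemma T1_addC : commutative T1_add.
Proof.
move=> x y; elim/(@quotW _ T1_type): x => x; elim/(@quotW _ T1_type): y => y.
by rewrite !T1_addE addrC.
Qed.

Lemma T1_add0 : left_id T1_zero T1_add.
Proof. by move=> x; elim/(@quotW _ T1_type): x => x; rewrite /T1_zero T1_addE add0r. Qed.

Lemma T1_addN : left_inverse T1_zero T1_opp T1_add.
Proof. by move=> x; elim/(@quotW _ T1_type): x => x; rewrite T1_oppE T1_addE addNr. Qed.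

HB.instance Definition _ :=
  GRing.isZmodule.Build T1_type T1_addA T1_addC T1_add0 T1_addN.

Lemma T1_addE' (x y : FB) : piT x + piT y = piT (x + y) :> T1_type.
Proof. exact: T1_addE. Qed.

Lemma T1_scaleA a b (x : T1_type) :
  T1_scale a (T1_scale b x) = T1_scale (a * b) x.
Proof. by elim/(@quotW _ T1_type): x => x; rewrite !T1_scaleE scalerA. Qed.

Lemma T1_scale1 : left_id 1 T1_scale.
Proof. by move=> x; elim/(@quotW _ T1_type): x => x; rewrite T1_scaleE scale1r. Qed.

Lemma T1_scaleDr : right_distributive T1_scale +%R.
Proof.
move=> a x y; elim/(@quotW _ T1_type): x => x; elim/(@quotW _ T1_type): y => y.
by rewrite T1_addE' !T1_scaleE T1_addE' scalerDr.
Qed.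

Lemma T1_scaleDl (x : T1_type) :
  {morph T1_scale ^~ x : a b / a + b}.
Proof.
elim/(@quotW _ T1_type): x => x a b.
by rewrite !T1_scaleE T1_addE' scalerDl.
Qed.

HB.instance Definition _ :=
  GRing.Zmodule_isLmodule.Build R T1_type T1_scaleA T1_scale1 T1_scaleDr
    T1_scaleDl.

Definition T1 : lmodType R := T1_type.

Definition T1_delta (E : T1) : T0 := fb_delta (repr E).
Definition T1_lact (a : T0) (E : T1) : T1 := piT (fb_lact a (repr E)).
Definition T1_ract (E : T1) (b : T0) : T1 := piT (fb_ract (repr E) b).
Definition T1_mul (E F : T1) : T1 := T1_lact (T1_delta E) F.

Definition TV : xmod_data R := XModData T1_mul T1_lact T1_ract T1_delta.

(* Z(v ∧ w) = class of 1 ⊗ (v ∧ w) ⊗ 1, with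
   v ∧ w = \sum_(i<j) (v_i w_j - v_j w_i) e_i ∧ e_j *)
Definition Zu (v w : V) : T1 :=
  piT (\sum_(p : wedge_idx)
         (vcoord (val p).1 v * vcoord (val p).2 w
          - vcoord (val p).2 v * vcoord (val p).1 w)
         *: fb_gen (mone : word) p (mone : word)).

End TV.

(* T_0(V) is the free unital algebra on a basis (e_i) of V, so alpha extends
   uniquely to an algebra map sending a word e_i1 ... e_ik to
   alpha(e_i1) ... alpha(e_ik).  The free bimodule T_0 ⊗ Λ²V ⊗ T_0 maps to A_1
   by u ⊗ (e_i ∧ e_j) ⊗ w |-> alpha~(u) ⋗ gamma(e_i, e_j) ⋖ alpha~(w); this map
   intertwines the actions and, because delta ∘ gamma = [alpha, alpha], the
   boundaries.  The Peiffer identities of A then force it to vanish on the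
   Peiffer relations Pf, so it descends to T_1(V).  Uniqueness holds because
   zeta(V) generates T_0 as an algebra and Z(Λ²V) generates T_1 as a
   T_0-bimodule. *)
From HB Require Import structures.
From mathcomp Require Import all_boot all_algebra finmap generic_quotient.
From mathcomp.multinomials Require Import monalg.
From mathcomp.classical Require Import boolp.
From mathcomp Require Import reals.

Set Implicit Arguments.
Unset Strict Implicit.
Unset Printing Implicit Defensive.

Import GRing.Theory.
Local Open Scope fset_scope.
Local Open Scope ring_scope.
Local Open Scope quotient_scope.

Section IsLinear.
Context (R : comNzRingType) (U W : lmodType R) (f : U -> W).
Hypothesis f_lin : is_linear f.

(* [is_linear f] is convertible to [linear f], so [f] packs as a [{linear}]. *)
Let fL : {linear U -> W} := HB.pack f (GRing.isLinear.Build R U W *:%R f f_lin).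

Lemma is_linearD x y : f (x + y) = f x + f y.
Proof. exact: (raddfD fL). Qed.

Lemma is_linearB x y : f (x - y) = f x - f y.
Proof. exact: (raddfB fL). Qed.

Lemma is_linearZ c x : f (c *: x) = c *: f x.
Proof. exact: (linearZ_LR fL). Qed.

Lemma is_linear_sum (I : Type) (r : seq I) (P : pred I) (F : I -> U) :
  f (\sum_(i <- r | P i) F i) = \sum_(i <- r | P i) f (F i).
Proof. exact: (linear_sum fL). Qed.

End IsLinear.

Section IsLinearClosure.
Context (R : comNzRingType).

Lemma is_linear_comp (U W X : lmodType R) (f : W -> X) (g : U -> W) :
  is_linear f -> is_linear g -> is_linear (fun x => f (g x)).
Proof. by move=> f_lin g_lin c x y; rewrite g_lin f_lin. Qed.

Lemma eq_is_linear (U W : lmodType R) (f g : U -> W) :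
  f =1 g -> is_linear g -> is_linear f.
Proof. by move=> fg g_lin c x y; rewrite !fg g_lin. Qed.

Lemma is_linear_mulr (A : algType R) (y : A) : is_linear (fun x : A => x * y).
Proof. by move=> c x z; rewrite mulrDl scalerAl. Qed.

Lemma is_linear_mull (A : algType R) (y : A) : is_linear (fun x : A => y * x).
Proof. by move=> c x z; rewrite mulrDr scalerAr. Qed.

End IsLinearClosure.

Lemma malgU_scale (R : nzRingType) (K : choiceType) (c : R) (k : K) :
  << c *g k >> = c *: (<< k >> : {malg R[K]}).
Proof. by apply/malgP => k'; rewrite mcoeffZ !mcoeffU mulr_natr. Qed.

Lemma malgUM (R : nzRingType) (K : monomType) (u v : K) :
  (<< u >> * << v >> : {malg R[K]}) = << mmul u v >>.
Proof. by rewrite malgM_def fgmulUU mulr1. Qed.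

Lemma malgU_fmonom (R : nzRingType) (I : choiceType) (u : {fmonom I}) :
  (<< u >> : {malg R[{fmonom I}]}) = \prod_(i <- fmonom_val u) << fmu i >>.
Proof.
case: u => s; elim: s => [|i s IH]; first by rewrite big_nil -fmoneE.
rewrite big_cons -IH malgUM; congr << _ >>.
by apply: val_inj; rewrite /= fmM fmU.
Qed.

Section MalgExtension.
Context (R : comNzRingType) (K : choiceType) (M : lmodType R).

Definition malg_ext (h : K -> M) (g : {malg R[K]}) : M :=
  \sum_(k <- msupp g) g@_k *: h k.

Lemma malg_extEw (h : K -> M) (d : {fset K}) g : msupp g `<=` d ->
  malg_ext h g = \sum_(k <- d) g@_k *: h k.
Proof.
move=> le; rewrite /malg_ext (big_fset_incl _ le) //= => x _ /mcoeff_outdom ->.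
by rewrite scale0r.
Qed.

Lemma malg_ext_linear (h : K -> M) : is_linear (malg_ext h).
Proof.
move=> c x y; set d := msupp x `|` msupp y.
have le_x : msupp x `<=` d by apply: fsubsetUl.
have le_y : msupp y `<=` d by apply: fsubsetUr.
have le_xy : msupp (c *: x + y) `<=` d.
  by apply: fsubset_trans (msuppD_le _ _) _; apply: fsetSU; apply: msuppZ_le.
rewrite (malg_extEw h le_x) (malg_extEw h le_y) (malg_extEw h le_xy).
rewrite scaler_sumr -big_split; apply: eq_bigr => k _.
by rewrite mcoeffD mcoeffZ scalerDl scalerA.
Qed.

Lemma malg_extU (h : K -> M) k : malg_ext h << k >> = h k.
Proof. by rewrite (malg_extEw h msuppU_le) big_seq_fset1 mcoeffUU scale1r. Qed.

Lemma malg_extE (f : {malg R[K]} -> M) : is_linear f ->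
  forall g, f g = malg_ext (fun k => f << k >>) g.
Proof.
move=> f_lin g; rewrite {1}(monalgE g) (is_linear_sum f_lin).
by apply: eq_bigr => k _; rewrite malgU_scale (is_linearZ f_lin).
Qed.

Lemma eq_malg_linear (f g : {malg R[K]} -> M) : is_linear f -> is_linear g ->
  (forall k, f << k >> = g << k >>) -> f =1 g.
Proof.
move=> f_lin g_lin fg x; rewrite (malg_extE f_lin) (malg_extE g_lin).
by apply: eq_bigr => k _; rewrite fg.
Qed.

End MalgExtension.

Lemma malg_ext2_linear (R : comNzRingType) (K K' : choiceType) (M : lmodType R)
    (h : K -> K' -> M) (x : {malg R[K]}) :
  is_linear (fun y : {malg R[K']} => malg_ext (fun u => malg_ext (h u) y) x).
Proof.
move=> c y z; rewrite ![malg_ext _ x]/malg_ext scaler_sumr -big_split.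
by apply: eq_bigr => u _; rewrite malg_ext_linear scalerDr !scalerA mulrC.
Qed.

Section FreeBimodule.
Context (R : fieldType) (V : vectType R).

Local Notation piT := (\pi_(T1_type V)).
Implicit Types (a b d : T0 V) (E F : FB V) (u w : word V) (p : wedge_idx V).

Lemma fb_lactE a E : fb_lact a E =
  malg_ext (fun u => malg_ext (fun k => fb_gen (mmul u k.1.1) k.1.2 k.2) E) a.
Proof.
apply: eq_bigr => u _; rewrite scaler_sumr.
by apply: eq_bigr => k _; rewrite scalerA.
Qed.

Lemma fb_ractE E b : fb_ract E b =
  malg_ext (fun k => malg_ext (fun u => fb_gen k.1.1 k.1.2 (mmul k.2 u)) b) E.
Proof.
apply: eq_bigr => k _; rewrite scaler_sumr.
by apply: eq_bigr => u _; rewrite scalerA.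
Qed.

Lemma fb_lact_linearl E : is_linear (fun a => fb_lact a E).
Proof. exact: eq_is_linear (fb_lactE^~ E) (malg_ext_linear _). Qed.

Lemma fb_lact_linear a : is_linear (fb_lact a).
Proof. exact: eq_is_linear (fb_lactE a) (malg_ext2_linear _ _). Qed.

Lemma fb_ract_linear b : is_linear (fun E => fb_ract E b).
Proof. exact: eq_is_linear (fb_ractE^~ b) (malg_ext_linear _). Qed.

Lemma fb_ract_linearr E : is_linear (fb_ract E).
Proof. exact: eq_is_linear (fb_ractE E) (malg_ext2_linear _ _). Qed.

Lemma fb_delta_linear : is_linear (@fb_delta R V).
Proof. exact: malg_ext_linear. Qed.

Lemma fb_lactU u v p w : fb_lact << u >> (fb_gen v p w) = fb_gen (mmul u v) p w.
Proof. by rewrite fb_lactE !malg_extU. Qed.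

Lemma fb_ractU u p w v : fb_ract (fb_gen u p w) << v >> = fb_gen u p (mmul w v).
Proof. by rewrite fb_ractE !malg_extU. Qed.

Lemma fb_deltaU u p w : fb_delta (fb_gen u p w) = << u >> * wcomm p * << w >>.
Proof. exact: (malg_extU _ (u, p, w)). Qed.

Lemma eq_fb_linear (M : lmodType R) (f g : FB V -> M) :
  is_linear f -> is_linear g ->
  (forall u p w, f (fb_gen u p w) = g (fb_gen u p w)) -> f =1 g.
Proof.
by move=> f_lin g_lin fg; apply: eq_malg_linear => // -[[u p] w]; apply: fg.
Qed.

Lemma fb_lactA a b F : fb_lact a (fb_lact b F) = fb_lact (a * b) F.
Proof.
move: a; apply: eq_malg_linear => [||u].
- exact: fb_lact_linearl.
- exact: is_linear_comp (fb_lact_linearl F) (is_linear_mulr b).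
move: b; apply: eq_malg_linear => [||v].
- exact: is_linear_comp (fb_lact_linear _) (fb_lact_linearl F).
- exact: is_linear_comp (fb_lact_linearl F) (is_linear_mull _).
move: F; apply: eq_fb_linear => [||x p w].
- exact: is_linear_comp (fb_lact_linear _) (fb_lact_linear _).
- exact: fb_lact_linear.
by rewrite !fb_lactU malgUM fb_lactU mulmA.
Qed.

Lemma fb_ractA b d E : fb_ract (fb_ract E b) d = fb_ract E (b * d).
Proof.
move: E; apply: eq_fb_linear => [||x p w].
- exact: is_linear_comp (fb_ract_linear d) (fb_ract_linear b).
- exact: fb_ract_linear.
move: b; apply: eq_malg_linear => [||u].
- exact: is_linear_comp (fb_ract_linear d) (fb_ract_linearr _).
- exact: is_linear_comp (fb_ract_linearr _) (is_linear_mulr d).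
move: d; apply: eq_malg_linear => [||v].
- exact: fb_ract_linearr.
- exact: is_linear_comp (fb_ract_linearr _) (is_linear_mull _).
by rewrite [in LHS]fb_ractU [in LHS]fb_ractU malgUM [in RHS]fb_ractU mulmA.
Qed.

Lemma fb_lact_ract a d E : fb_lact a (fb_ract E d) = fb_ract (fb_lact a E) d.
Proof.
move: a; apply: eq_malg_linear => [||u].
- exact: fb_lact_linearl.
- exact: is_linear_comp (fb_ract_linear d) (fb_lact_linearl E).
move: E; apply: eq_fb_linear => [||x p w].
- exact: is_linear_comp (fb_lact_linear _) (fb_ract_linear d).
- exact: is_linear_comp (fb_ract_linear d) (fb_lact_linear _).
move: d; apply: eq_malg_linear => [||v].
- exact: is_linear_comp (fb_lact_linear _) (fb_ract_linearr _).
- exact: fb_ract_linearr.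
by rewrite [in LHS]fb_ractU [in LHS]fb_lactU [in RHS]fb_lactU [in RHS]fb_ractU.
Qed.

Lemma fb_delta_lact a E : fb_delta (fb_lact a E) = a * fb_delta E.
Proof.
move: a; apply: eq_malg_linear => [||u].
- exact: is_linear_comp fb_delta_linear (fb_lact_linearl E).
- exact: (@is_linear_mulr _ (T0 V)).
move: E; apply: eq_fb_linear => [||x p w].
- exact: is_linear_comp fb_delta_linear (fb_lact_linear _).
- exact: is_linear_comp (is_linear_mull _) fb_delta_linear.
by rewrite fb_lactU [LHS]fb_deltaU [in RHS]fb_deltaU -(malgUM _ u x) !mulrA.
Qed.

Lemma fb_delta_ract b E : fb_delta (fb_ract E b) = fb_delta E * b.
Proof.
move: b; apply: eq_malg_linear => [||u].
- exact: is_linear_comp fb_delta_linear (fb_ract_linearr E).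
- exact: (@is_linear_mull _ (T0 V)).
move: E; apply: eq_fb_linear => [||x p w].
- exact: is_linear_comp fb_delta_linear (fb_ract_linear _).
- exact: is_linear_comp (is_linear_mulr _) fb_delta_linear.
rewrite fb_ractU [LHS]fb_deltaU [in RHS]fb_deltaU -(malgUM _ w u).
exact: mulrA.
Qed.

Lemma Pf_lact a E : Pf E -> Pf (fb_lact a E).
Proof.
case=> s ->; exists [seq (t.1.1, fb_lact a t.1.2, t.2) | t <- s].
rewrite big_map (is_linear_sum (fb_lact_linear a)); apply: eq_bigr => t _ /=.
by rewrite (is_linearZ (fb_lact_linear a)) (is_linearB (fb_lact_linear a))
  fb_lactA -fb_delta_lact fb_lact_ract.
Qed.

Lemma Pf_ract b E : Pf E -> Pf (fb_ract E b).
Proof.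
case=> s ->; exists [seq (t.1.1, t.1.2, fb_ract t.2 b) | t <- s].
rewrite big_map (is_linear_sum (fb_ract_linear b)); apply: eq_bigr => t _ /=.
by rewrite (is_linearZ (fb_ract_linear b)) (is_linearB (fb_ract_linear b))
  -fb_lact_ract fb_ractA -fb_delta_ract.
Qed.

Lemma piT_linear : is_linear (fun E => piT E : T1 V).
Proof. by move=> c x y; rewrite -T1_addE -T1_scaleE. Qed.

Lemma T1_lactE a E : T1_lact a (piT E) = piT (fb_lact a E).
Proof.
apply/piTP; rewrite -(is_linearB (fb_lact_linear a)).
exact/Pf_lact/reprP.
Qed.

Lemma T1_ractE b E : T1_ract (piT E) b = piT (fb_ract E b).
Proof.
apply/piTP; rewrite -(is_linearB (fb_ract_linear b)).
exact/Pf_ract/reprP.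
Qed.

End FreeBimodule.

Section Basis.
Context (R : fieldType) (V : vectType R).

Local Notation n := (\dim {: V}).
Local Notation piT := (\pi_(T1_type V)).

Definition evec (i : 'I_n) : V := (vbasis {: V})`_i.

Lemma vcoord_evec i j : vcoord j (evec i) = (i == j)%:R.
Proof. exact: coord_free (basis_free (vbasisP _)). Qed.

Lemma vcoord_expand v : v = \sum_i vcoord i v *: evec i.
Proof. exact: coord_vbasis (memvf v). Qed.

Lemma zeta_evec i : zeta (evec i) = << fmu i >>.
Proof.
rewrite /zeta (bigD1 i) //= vcoord_evec eqxx scale1r big1 ?addr0 // => j ji.
by rewrite vcoord_evec eq_sym (negbTE ji) scale0r.
Qed.

Lemma big_wedge_idx (M : zmodType) (F : 'I_n * 'I_n -> M) :
  \sum_(p : wedge_idx V) F (val p)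
  = \sum_(ij : 'I_n * 'I_n | (ij.1 < ij.2)%N) F ij.
Proof.
rewrite [RHS](reindex_omap (val : wedge_idx V -> _) insub); last first.
  by move=> ij lt; rewrite insubT.
by apply: eq_bigl => p; rewrite valK eqxx andbT (valP p).
Qed.

Section Alternating.
Context (M : lmodType R) (b : V -> V -> M).
Hypotheses (b_bilin : is_bilinear b) (b_alt : forall v, b v v = 0).

Let b_linl w : is_linear (b^~ w). Proof. by case: b_bilin. Qed.
Let b_linr v : is_linear (b v). Proof. by case: b_bilin. Qed.

Lemma alternating_antisym v w : b w v = - b v w.
Proof.
have := b_alt (v + w).
rewrite (is_linearD (b_linl _)) !(is_linearD (b_linr _)) !b_alt add0r addr0.
by move/eqP; rewrite addr_eq0 => /eqP ->; rewrite opprK.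
Qed.

Lemma bilinear_expand v w :
  b v w = \sum_i \sum_j (vcoord i v * vcoord j w) *: b (evec i) (evec j).
Proof.
rewrite {1}(vcoord_expand v) {1}(vcoord_expand w) (is_linear_sum (b_linl _)).
apply: eq_bigr => i _; rewrite (is_linearZ (b_linl _)) (is_linear_sum (b_linr _)).
rewrite scaler_sumr; apply: eq_bigr => j _.
by rewrite (is_linearZ (b_linr _)) scalerA.
Qed.

Lemma alternating_expand v w : b v w = \sum_(p : wedge_idx V)
  (vcoord (val p).1 v * vcoord (val p).2 w
   - vcoord (val p).2 v * vcoord (val p).1 w)
    *: b (evec (val p).1) (evec (val p).2).
Proof.
pose c (ij : 'I_n * 'I_n) := vcoord ij.1 v * vcoord ij.2 w.
pose bE (ij : 'I_n * 'I_n) := b (evec ij.1) (evec ij.2).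
rewrite (big_wedge_idx (fun ij => (c ij - c (ij.2, ij.1)) *: bE ij)).
rewrite bilinear_expand pair_bigA /=.
rewrite (bigID (fun ij : 'I_n * 'I_n => (ij.1 < ij.2)%N)) /=.
rewrite [X in _ + X](bigID (fun ij : 'I_n * 'I_n => (ij.2 < ij.1)%N)) /=.
have diag_eq0 : \sum_(ij : 'I_n * 'I_n | ~~ (ij.1 < ij.2)%N && ~~ (ij.2 < ij.1)%N)
    c ij *: bE ij = 0.
  apply: big1 => -[i j] /= /andP [ij ji].
  suff -> : i = j by rewrite /bE b_alt scaler0.
  by apply/val_inj/eqP; rewrite eqn_leq leqNgt ji leqNgt ij.
rewrite diag_eq0 addr0 [X in _ + X](reindex_inj (can_inj (@swap_pairK _ _))) /=.
rewrite [X in _ + X](eq_bigl (fun ij : 'I_n * 'I_n => (ij.1 < ij.2)%N));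
  last first.
  by move=> [i j] /=; rewrite andbC; case: ltngtP.
rewrite -big_split /=; apply: eq_bigr => -[i j] _ /=.
by rewrite /bE (alternating_antisym (evec i)) scalerN scalerBl.
Qed.

End Alternating.

Lemma Zu_evec p : Zu (evec (val p).1) (evec (val p).2) = piT (fb_gen mone p mone).
Proof.
rewrite /Zu; congr piT.
have p12 : ((val p).1 == (val p).2) = false.
  by rewrite -val_eqE; apply: ltn_eqF; exact: (valP p).
rewrite (bigD1 p) //= big1 ?addr0 => [|q qp].
  by rewrite !vcoord_evec !eqxx p12 mul0r subr0 mulr1 scale1r.
have q_neq : (((val p).1 == (val q).1) && ((val p).2 == (val q).2)) = false.
  apply/negbTE; apply: contra qp => /andP [/eqP e1 /eqP e2]; apply/eqP/val_inj.
  by rewrite [val q]surjective_pairing -e1 -e2 -surjective_pairing.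
have q_swap : (((val p).1 == (val q).2) && ((val p).2 == (val q).1)) = false.
  apply/negbTE/negP => /andP [/eqP e1 /eqP e2].
  have := valP q; have := valP p; rewrite /= -e1 -e2 => lt_p lt_q.
  by have := ltn_trans lt_p lt_q; rewrite ltnn.
by rewrite !vcoord_evec -!natrM !mulnb q_neq q_swap subrr scale0r.
Qed.

End Basis.

Section CrossedModuleLaws.
Context (R : comNzRingType) (A : xmod_data R).
Hypothesis A_xmod : is_xmod A.
Implicit Types (a b : xm0 A) (E F : xm1 A).

Ltac xmod_laws := case: A_xmod =>
  [_ [_ [[lact_lin lact_linr] [[ract_lin ract_linr] [lactM [lact1 [ractM [ract1
  [lact_ract [_ [_ [_ [_ [delta_lin [_ [delta_lact [delta_ract
  [peiffer_l peiffer_r]]]]]]]]]]]]]]]]]].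

Lemma xlact_linearl E : is_linear (fun a => xlact A a E).
Proof. by xmod_laws. Qed.
Lemma xlact_linear a : is_linear (xlact A a). Proof. by xmod_laws. Qed.
Lemma xract_linear a : is_linear (fun E => xract A E a). Proof. by xmod_laws. Qed.
Lemma xract_linearr E : is_linear (xract A E). Proof. by xmod_laws. Qed.
Lemma xlactM a b E : xlact A (a * b) E = xlact A a (xlact A b E).
Proof. by xmod_laws. Qed.
Lemma xlact1 E : xlact A 1 E = E. Proof. by xmod_laws. Qed.
Lemma xractM a b E : xract A E (a * b) = xract A (xract A E a) b.
Proof. by xmod_laws. Qed.
Lemma xract1 E : xract A E 1 = E. Proof. by xmod_laws. Qed.
Lemma xlact_ract a b E : xract A (xlact A a E) b = xlact A a (xract A E b).
Proof. by xmod_laws. Qed.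
Lemma xdelta_linear : is_linear (xdelta A). Proof. by xmod_laws. Qed.
Lemma xdelta_lact a E : xdelta A (xlact A a E) = a * xdelta A E.
Proof. by xmod_laws. Qed.
Lemma xdelta_ract a E : xdelta A (xract A E a) = xdelta A E * a.
Proof. by xmod_laws. Qed.
Lemma xlact_delta E F : xlact A (xdelta A E) F = xmul1 A E F.
Proof. by xmod_laws. Qed.
Lemma xract_delta E F : xract A E (xdelta A F) = xmul1 A E F.
Proof. by xmod_laws. Qed.

End CrossedModuleLaws.

Section UniversalProperty.
Context (R : fieldType) (V : vectType R) (A : xmod_data R).
Context (alpha : V -> xm0 A) (gamma : V -> V -> xm1 A).

Local Notation piT := (\pi_(T1_type V)).
Implicit Types (a b : T0 V) (E F : FB V) (u w : word V) (p : wedge_idx V).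

Definition alpha_word u : xm0 A := \prod_(i <- fmonom_val u) alpha (evec i).

Definition alpha_ext : T0 V -> xm0 A := malg_ext alpha_word.

Definition gamma_wedge p : xm1 A := gamma (evec (val p).1) (evec (val p).2).

Definition gamma_fb : FB V -> xm1 A := malg_ext (fun k : fbkey V =>
  xlact A (alpha_ext << k.1.1 >>)
    (xract A (gamma_wedge k.1.2) (alpha_ext << k.2 >>))).

Definition gamma_ext (E : T1 V) : xm1 A := gamma_fb (repr E).

Lemma alpha_ext_linear : is_linear alpha_ext.
Proof. exact: malg_ext_linear. Qed.

Lemma alpha_extU u : alpha_ext << u >> = alpha_word u.
Proof. exact: malg_extU. Qed.

Lemma alpha_ext1 : alpha_ext 1 = 1.
Proof. by rewrite alpha_extU /alpha_word fm1 big_nil. Qed.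

Lemma alpha_extM a b : alpha_ext (a * b) = alpha_ext a * alpha_ext b.
Proof.
move: a; apply: eq_malg_linear => [||u].
- exact: is_linear_comp alpha_ext_linear (@is_linear_mulr _ (T0 V) b).
- exact: is_linear_comp (is_linear_mulr _) alpha_ext_linear.
move: b; apply: eq_malg_linear => [||w].
- exact: is_linear_comp alpha_ext_linear (@is_linear_mull _ (T0 V) _).
- exact: is_linear_comp (is_linear_mull _) alpha_ext_linear.
by rewrite malgUM !alpha_extU /alpha_word fmM big_cat.
Qed.

Lemma alpha_ext_fmu i : alpha_ext << fmu i >> = alpha (evec i).
Proof. by rewrite alpha_extU /alpha_word fmU big_seq1. Qed.

Lemma alpha_ext_wcomm p : alpha_ext (wcomm p) =
  alpha (evec (val p).1) * alpha (evec (val p).2)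
  - alpha (evec (val p).2) * alpha (evec (val p).1).
Proof. by rewrite (is_linearB alpha_ext_linear) !alpha_extM !alpha_ext_fmu. Qed.

Lemma alpha_ext_unique (g0 : T0 V -> xm0 A) :
  is_linear g0 -> g0 1 = 1 -> (forall a b, g0 (a * b) = g0 a * g0 b) ->
  (forall v, alpha v = g0 (zeta v)) -> g0 =1 alpha_ext.
Proof.
move=> g0_lin g0_1 g0M g0_zeta.
apply: eq_malg_linear g0_lin alpha_ext_linear _ => u.
rewrite alpha_extU malgU_fmonom (big_morph g0 g0M g0_1).
by apply: eq_bigr => i _; rewrite -zeta_evec -g0_zeta.
Qed.

Lemma gamma_fb_linear : is_linear gamma_fb.
Proof. exact: malg_ext_linear. Qed.

Lemma gamma_fbU u p w : gamma_fb (fb_gen u p w) =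
  xlact A (alpha_ext << u >>) (xract A (gamma_wedge p) (alpha_ext << w >>)).
Proof. exact: (malg_extU _ (u, p, w)). Qed.

Lemma gamma_ext_unique (g1 : T1 V -> xm1 A) : is_linear g1 ->
  (forall a (E : T1 V), g1 (T1_lact a E) = xlact A (alpha_ext a) (g1 E)) ->
  (forall (E : T1 V) a, g1 (T1_ract E a) = xract A (g1 E) (alpha_ext a)) ->
  (forall v w : V, gamma v w = g1 (Zu v w)) -> g1 =1 gamma_ext.
Proof.
move=> g1_lin g1_lact g1_ract g1_Zu.
suff g1_pi E : g1 (piT E) = gamma_fb E by move=> E; rewrite -{1}[E]reprK g1_pi.
move: E; apply: eq_fb_linear => [||u p w].
- exact: is_linear_comp g1_lin (@piT_linear _ V).
- exact: gamma_fb_linear.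
have -> : piT (fb_gen u p w) =
    T1_lact << u >> (T1_ract (Zu (evec (val p).1) (evec (val p).2)) << w >>).
  by rewrite Zu_evec T1_ractE T1_lactE fb_ractU fb_lactU mul1m mulm1.
by rewrite g1_lact g1_ract -g1_Zu gamma_fbU.
Qed.

Lemma xmod_morph_unique (g0 : T0 V -> xm0 A) (g1 : T1 V -> xm1 A) :
  is_xmod_morph (TV V) A g0 g1 ->
  (forall v, alpha v = g0 (zeta v)) ->
  (forall v w : V, gamma v w = g1 (Zu v w)) ->
  (g0, g1) = (alpha_ext, gamma_ext).
Proof.
move=> [[g0_lin [g0_1 g0M]] [g1_lin _] _ g1_lact g1_ract] g0_zeta g1_Zu.
have g0E := alpha_ext_unique g0_lin g0_1 g0M g0_zeta.
have g1E : g1 =1 gamma_ext.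
  apply: gamma_ext_unique g1_lin _ _ g1_Zu => [a E | E a].
  - by rewrite g1_lact g0E.
  - by rewrite g1_ract g0E.
by rewrite (funext g0E) (funext g1E).
Qed.

Section Existence.
Hypotheses (A_xmod : is_xmod A) (alpha_gamma : is_2connection alpha gamma).

Lemma alpha_ext_zeta v : alpha v = alpha_ext (zeta v).
Proof.
have [alpha_lin _ _ _] := alpha_gamma.
rewrite {1}(vcoord_expand v) (is_linear_sum alpha_lin).
rewrite (is_linear_sum alpha_ext_linear); apply: eq_bigr => i _.
by rewrite (is_linearZ alpha_lin) (is_linearZ alpha_ext_linear) alpha_ext_fmu.
Qed.

Lemma gamma_fb_lact a E :
  gamma_fb (fb_lact a E) = xlact A (alpha_ext a) (gamma_fb E).
Proof.
move: a; apply: eq_malg_linear => [||u].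
- exact: is_linear_comp gamma_fb_linear (fb_lact_linearl E).
- exact: is_linear_comp (xlact_linearl A_xmod _) alpha_ext_linear.
move: E; apply: eq_fb_linear => [||x p w].
- exact: is_linear_comp gamma_fb_linear (fb_lact_linear _).
- exact: is_linear_comp (xlact_linear A_xmod _) gamma_fb_linear.
rewrite fb_lactU [LHS]gamma_fbU [in RHS]gamma_fbU -(malgUM _ u x) alpha_extM.
by rewrite (xlactM A_xmod).
Qed.

Lemma gamma_fb_ract b E :
  gamma_fb (fb_ract E b) = xract A (gamma_fb E) (alpha_ext b).
Proof.
move: b; apply: eq_malg_linear => [||u].
- exact: is_linear_comp gamma_fb_linear (fb_ract_linearr E).
- exact: is_linear_comp (xract_linearr A_xmod _) alpha_ext_linear.
move: E; apply: eq_fb_linear => [||x p w].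
- exact: is_linear_comp gamma_fb_linear (fb_ract_linear _).
- exact: is_linear_comp (xract_linear A_xmod _) gamma_fb_linear.
rewrite fb_ractU [LHS]gamma_fbU [in RHS]gamma_fbU -(malgUM _ w u) alpha_extM.
by rewrite (xractM A_xmod) (xlact_ract A_xmod).
Qed.

Lemma xdelta_gamma_fb E : xdelta A (gamma_fb E) = alpha_ext (fb_delta E).
Proof.
have [_ _ _ delta_gamma] := alpha_gamma.
move: E; apply: eq_fb_linear => [||u p w].
- exact: is_linear_comp (xdelta_linear A_xmod) gamma_fb_linear.
- exact: is_linear_comp alpha_ext_linear (@fb_delta_linear R V).
rewrite gamma_fbU fb_deltaU (xdelta_lact A_xmod) (xdelta_ract A_xmod).
by rewrite !alpha_extM alpha_ext_wcomm delta_gamma mulrA.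
Qed.

Lemma gamma_fb_Pf E : Pf E -> gamma_fb E = 0.
Proof.
case=> s ->; rewrite (is_linear_sum gamma_fb_linear) big1 // => -[[c E1] E2] _ /=.
rewrite (is_linearZ gamma_fb_linear) (is_linearB gamma_fb_linear).
rewrite gamma_fb_lact gamma_fb_ract.
have peiffer_l : xlact A (alpha_ext (fb_delta E1)) (gamma_fb E2)
    = xmul1 A (gamma_fb E1) (gamma_fb E2).
  by rewrite -(xlact_delta A_xmod) xdelta_gamma_fb.
have peiffer_r : xract A (gamma_fb E1) (alpha_ext (fb_delta E2))
    = xmul1 A (gamma_fb E1) (gamma_fb E2).
  by rewrite -(xract_delta A_xmod) xdelta_gamma_fb.
by rewrite peiffer_l peiffer_r subrr scaler0.
Qed.

Lemma gamma_extE E : gamma_ext (piT E) = gamma_fb E.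
Proof.
apply/eqP; rewrite -subr_eq0 -(is_linearB gamma_fb_linear).
exact/eqP/gamma_fb_Pf/reprP.
Qed.

Lemma gamma_ext_linear : is_linear gamma_ext.
Proof.
move=> c; elim/(@quotW _ (T1_type V)) => x; elim/(@quotW _ (T1_type V)) => y.
by rewrite -(@piT_linear _ V) !gamma_extE gamma_fb_linear.
Qed.

Lemma gamma_ext_Zu (v w : V) : gamma v w = gamma_ext (Zu v w).
Proof.
have [_ gamma_bilin gamma_alt _] := alpha_gamma.
rewrite (alternating_expand gamma_bilin gamma_alt) gamma_extE.
rewrite (is_linear_sum gamma_fb_linear).
apply: eq_bigr => p _; rewrite (is_linearZ gamma_fb_linear) gamma_fbU.
by rewrite -[<< mone >>]/(1 : T0 V) alpha_ext1 (xlact1 A_xmod) (xract1 A_xmod).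
Qed.

Lemma alpha_gamma_ext_morph : is_xmod_morph (TV V) A alpha_ext gamma_ext.
Proof.
split => /=.
- split; first exact: alpha_ext_linear.
  by split; [exact: alpha_ext1 | exact: alpha_extM].
- split; first exact: gamma_ext_linear.
  move=> E F; rewrite /T1_mul /T1_lact gamma_extE gamma_fb_lact.
  by rewrite -xdelta_gamma_fb (xlact_delta A_xmod).
- by move=> E; exact: xdelta_gamma_fb.
- by move=> a E; rewrite /T1_lact gamma_extE gamma_fb_lact.
- by move=> a E; rewrite /T1_ract gamma_extE gamma_fb_ract.
Qed.

End Existence.

End UniversalProperty.

Theorem proposition4p6 (R : realType) (V : vectType R) (A : xmod_data R) :
  is_xmod A ->
  forall (alpha : V -> xm0 A) (gamma : V -> V -> xm1 A),
    is_2connection alpha gamma ->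
    exists! f : (T0 V -> xm0 A) * (T1 V -> xm1 A),
      is_xmod_morph (TV V) A f.1 f.2 /\
      (forall v : V, alpha v = f.1 (zeta v)) /\
      (forall v w : V, gamma v w = f.2 (Zu v w)).
Proof.
move=> A_xmod alpha gamma alpha_gamma.
exists (alpha_ext alpha, gamma_ext alpha gamma); split.
  split; first exact: alpha_gamma_ext_morph.
  split=> /= [v | v w]; first exact: (alpha_ext_zeta alpha_gamma).
  exact: (gamma_ext_Zu A_xmod alpha_gamma).
move=> [g0 g1] [g_morph [g_zeta g_Zu]].
by rewrite (xmod_morph_unique g_morph g_zeta g_Zu).
Qed.
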